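(* Let $n\ge 3$ and $3\le d_1\le d_2\le\cdots\le d_n$. In $\mathbb{C}^{d_1}\otimes\cdots\otimes\mathbb{C}^{d_n}$ consider the following product states, where in each state every party not explicitly listed is in the state $|0\rangle$: ($\mathcal{B}_1$) $|0-i\rangle_1|i\rangle_n$ for $1\le i\le d_1-1$; ($\mathcal{B}_{k+1}$, $k=1,\dots,n-1$) $|i\rangle_k|0-i\rangle_{k+1}$ for $1\le i\le d_k-1$; ($\mathcal{B}_{n+k}$, $k=1,\dots,n-2$) $|1\rangle_k|0-i\rangle_{k+1}|i\rangle_{k+2}$ for $d_k\le i\le d_{k+1}-1$; ($\mathcal{B}_{2n-1}$) $|m_i\rangle_1|1\rangle_{n-1}|(i-1)-i\rangle_n$ for $d_{n-1}\le i\le d_n-1$, where $m_i=2$ if $i$ is even and $m_i=1$ if $i$ is odd; ($\mathcal{B}_{2n}$) $|0-2\rangle_1|0-2\rangle_{n-1}|i\rangle_n$ for $d_1\le i\le d_n-1$; ($\mathcal{B}_{2n+1}$) the stopper state $\bigotimes_{l=1}^n|0+1+\cdots+(d_l-1)\rangle_l$. This set has $\sum_{i=2}^{n-1}d_i+2d_n-n+1$ elements, its states are pairwise orthogonal, and for every party $t\in\{1,\dots,n\}$, every orthogonality-preserving local POVM element $E_t$ on party $t$ for this set is proportional to the identity. Consequently, this set cannot be perfectly distinguished by LOCC.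
   Context: $\{|i\rangle\}$ is the computational basis; $|i_1\pm i_2\pm\cdots\pm i_r\rangle$ denotes $\frac{1}{\sqrt r}(|i_1\rangle\pm|i_2\rangle\pm\cdots\pm|i_r\rangle)$; subscripts indicate the party; ranges $a\le i\le b$ with $a>b$ are empty. For a set $\{|\psi_a\rangle\}$ of pairwise orthogonal states in $\mathbb{C}^{d_1}\otimes\cdots\otimes\mathbb{C}^{d_n}$, a positive semidefinite operator $E_t$ on $\mathbb{C}^{d_t}$ (a POVM element $M_t^\dagger M_t$ of a measurement by party $t$) is called orthogonality-preserving if $\langle\psi_a|(\mathbb{I}\otimes\cdots\otimes E_t\otimes\cdots\otimes\mathbb{I})|\psi_b\rangle=0$ for all $a\neq b$; the measurement is trivial if all its POVM elements are proportional to the identity. A set of orthogonal states for which every party can only perform trivial orthogonality-preserving measurements cannot be perfectly distinguished by LOCC. *)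

From HB Require Import structures.
From mathcomp Require Import all_boot all_order all_algebra.
Set Implicit Arguments. Unset Strict Implicit. Unset Printing Implicit Defensive.
Import Order.TTheory GRing.Theory Num.Theory.
Local Open Scope ring_scope.

(* Conventions: parties are numbered 0..n-1 (paper party k is our party k-1);
   the local dimension of party l is d l. *)

Section Defs.
Variable C : numClosedFieldType.

Definition adj m n (A : 'M[C]_(m, n)) : 'M[C]_(n, m) := (map_mx Num.conj A)^T.

Definition ket (m i : nat) : 'cV[C]_m := \col_(j < m) (((j : nat) == i)%:R).

(* normalized signed superposition: s lists (coefficient, basis index),
   coefficients are +1/-1; result is (1/sqrt r) sum_p coef_p |i_p>. *)
Definition lc (m : nat) (s : seq (C * nat)) : 'cV[C]_m :=
  (sqrtC ((size s)%:R : C))^-1 *: \sum_(p <- s) p.1 *: ket m p.2.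

(* A product state is specified by giving, for each party l, its local
   superposition (spec l).  [st a] lists the explicitly given parties;
   every other party is in |0>. *)
Definition spec := nat -> seq (C * nat).

Definition st (a : seq (nat * seq (C * nat))) : spec :=
  fun l => if [seq p.2 | p <- a & p.1 == l] is v :: _ then v else [:: (1, 0%N)].

Definition local_state (d : nat -> nat) (f : spec) (l : nat) : 'cV[C]_(d l) :=
  lc (d l) (f l).

(* < psi_f | (I (x) ... (x) E_t (x) ... (x) I) | psi_g > for product states
   psi_f = (x)_l psi_f,l and psi_g = (x)_l psi_g,l on n parties. *)
Definition sandwich (n : nat) (d : nat -> nat) (f g : spec) (t : nat)
  (E : 'M[C]_(d t)) : C :=
  (\prod_(l < n | (l : nat) != t)
      (adj (local_state d f l) *m local_state d g l) 0 0)
  * (adj (local_state d f t) *m E *m local_state d g t) 0 0.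

Definition inner (n : nat) (d : nat -> nat) (f g : spec) : C :=
  \prod_(l < n) (adj (local_state d f l) *m local_state d g l) 0 0.

Definition psd m (E : 'M[C]_m) : Prop :=
  adj E = E /\ forall v : 'cV[C]_m, 0 <= (adj v *m E *m v) 0 0.

Definition orth_preserving (n : nat) (d : nat -> nat) (S : seq spec) (t : nat)
  (E : 'M[C]_(d t)) : Prop :=
  forall a b : nat, (a < size S)%N -> (b < size S)%N -> a <> b ->
    @sandwich n d (nth (fun _ => [::]) S a) (nth (fun _ => [::]) S b) t E = 0.

Definition states_pairwise_orthogonal (n : nat) (d : nat -> nat) (S : seq spec) : Prop :=
  forall a b : nat, (a < size S)%N -> (b < size S)%N -> a <> b ->
    inner n d (nth (fun _ => [::]) S a) (nth (fun _ => [::]) S b) = 0.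

Definition trivial_op m (E : 'M[C]_m) : Prop := exists c : C, E = c%:M.

Definition minus0 (i : nat) : seq (C * nat) := [:: (1, 0%N); (-1, i)].
Definition basis1 (i : nat) : seq (C * nat) := [:: (1, i)].

Definition theset (n : nat) (d : nat -> nat) : seq spec :=
  (* B_1 : |0-i>_1 |i>_n, 1 <= i <= d_1 - 1 *)
  [seq st [:: (0%N, minus0 i); (n.-1, basis1 i)] | i <- iota 1 (d 0%N).-1]
  (* B_{k+1}, k = 1..n-1 : |i>_k |0-i>_{k+1}, 1 <= i <= d_k - 1 *)
  ++ flatten [seq [seq st [:: (k, basis1 i); (k.+1, minus0 i)]
                   | i <- iota 1 (d k).-1] | k <- iota 0 n.-1]
  (* B_{n+k}, k = 1..n-2 : |1>_k |0-i>_{k+1} |i>_{k+2}, d_k <= i <= d_{k+1}-1 *)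
  ++ flatten [seq [seq st [:: (k, basis1 1); (k.+1, minus0 i); (k.+2, basis1 i)]
                   | i <- iota (d k) (d k.+1 - d k)] | k <- iota 0 n.-2]
  (* B_{2n-1} : |m_i>_1 |1>_{n-1} |(i-1)-i>_n, d_{n-1} <= i <= d_n - 1 *)
  ++ [seq st [:: (0%N, basis1 (if odd i then 1%N else 2%N)); (n.-2, basis1 1);
                 (n.-1, [:: (1, i.-1); (-1, i)])]
      | i <- iota (d n.-2) (d n.-1 - d n.-2)]
  (* B_{2n} : |0-2>_1 |0-2>_{n-1} |i>_n, d_1 <= i <= d_n - 1 *)
  ++ [seq st [:: (0%N, minus0 2); (n.-2, minus0 2); (n.-1, basis1 i)]
      | i <- iota (d 0%N) (d n.-1 - d 0%N)]
  (* B_{2n+1} : stopper state (x)_l |0+1+...+(d_l - 1)> *)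
  ++ [:: fun l => [seq (1, j) | j <- iota 0 (d l)]].

End Defs.

From mathcomp Require Import all_boot all_order all_algebra.
From mathcomp Require Import zify.
Import Order.TTheory GRing.Theory Num.Theory.
Local Open Scope ring_scope.
Set Implicit Arguments. Unset Strict Implicit. Unset Printing Implicit Defensive.

(* Every state of the set is a product state, so two of them are orthogonal as
   soon as their local vectors at one party are, and for every pair of states
   such a party is exhibited.  Conversely, if two states have non-orthogonal
   local vectors at every party other than t, orthogonality preservation of E
   on party t says exactly <u|E|v> = 0 for their local vectors u, v at t.
   Pairs of this kind make every off-diagonal entry of E vanish; pairing a
   state whose local vector at t is |0-i> (on the last party and for
   i >= d_(n-1), |(i-1)-i>) with the stopper state then gives E_ii = E_00
   (resp. E_ii = E_(i-1)(i-1)).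
   Hence E is scalar. *)

Section LocalAlgebra.
Variable C : numClosedFieldType.
Implicit Types (m : nat) (s : seq (C * nat)).

Lemma adjD m k (A B : 'M[C]_(m, k)) : adj (A + B) = adj A + adj B.
Proof. by apply/matrixP => i j; rewrite !mxE rmorphD. Qed.

Lemma adjZ m k a (A : 'M[C]_(m, k)) : adj (a *: A) = Num.conj a *: adj A.
Proof. by apply/matrixP => i j; rewrite !mxE rmorphM. Qed.

Lemma adj0 m k : adj (0 : 'M[C]_(m, k)) = 0.
Proof. by apply/matrixP => i j; rewrite !mxE rmorph0. Qed.

Definition mxelem m (M : 'M[C]_m) i j : C := (adj (ket C m i) *m M *m ket C m j) 0 0.

Lemma ket_out m k : (m <= k)%N -> ket C m k = 0.
Proof.
move=> le_mk; apply/matrixP => a b; rewrite !mxE.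
by case: eqP => // a_k; move: (ltn_ord a); rewrite a_k ltnNge le_mk.
Qed.

Lemma mxelem_out m (M : 'M[C]_m) i j : (m <= i)%N || (m <= j)%N -> mxelem M i j = 0.
Proof.
rewrite /mxelem; case/orP => [/ket_out -> | /ket_out ->].
  by rewrite adj0 !mul0mx mxE.
by rewrite mulmx0 mxE.
Qed.

Lemma mxelem_ord m (M : 'M[C]_m) (i j : 'I_m) : mxelem M i j = M i j.
Proof.
rewrite /mxelem mxE (bigD1 j) //= big1 => [|k]; last first.
  by rewrite -val_eqE [ket _ _ _ _ _]mxE => /negPf ->; rewrite mulr0.
rewrite addr0 [ket _ _ _ _ _]mxE eqxx mulr1 mxE (bigD1 i) //= big1 => [|k].
  by rewrite !mxE eqxx conjC_nat mul1r addr0.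
by rewrite -val_eqE !mxE => /negPf ->; rewrite conjC_nat mul0r.
Qed.

Lemma mxelem1 m i j : mxelem (1%:M : 'M[C]_m) i j = ((i == j) && (i < m)%N)%:R.
Proof.
have [lt_im | le_mi] := ltnP i m; last by rewrite mxelem_out ?le_mi // andbF.
have [lt_jm | le_mj] := ltnP j m; last first.
  rewrite mxelem_out ?le_mj ?orbT //; case: eqP => // i_j.
  by move: lt_im; rewrite i_j ltnNge le_mj.
by rewrite (mxelem_ord _ (Ordinal lt_im) (Ordinal lt_jm)) mxE andbT.
Qed.

Definition braket m (M : 'M[C]_m) s s' : C :=
  \sum_(p <- s) \sum_(q <- s') Num.conj p.1 * q.1 * mxelem M p.2 q.2.

Definition overlap m s s' : C := braket (1%:M : 'M[C]_m) s s'.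

Definition lc_factor s : C := (sqrtC (size s)%:R)^-1.

Lemma braket_nil m (M : 'M[C]_m) s : braket M [::] s = 0.
Proof. by rewrite /braket big_nil. Qed.

Lemma braket_nilr m (M : 'M[C]_m) s : braket M s [::] = 0.
Proof. by rewrite /braket big1 // => p _; rewrite big_nil. Qed.

Lemma lc_factor_neq0 s : s != [::] -> lc_factor s != 0.
Proof. by case: s => // p s _; rewrite invr_eq0 sqrtC_eq0 pnatr_eq0. Qed.

Lemma lc_braket m (M : 'M[C]_m) s s' :
  (adj (lc m s) *m M *m lc m s') 0 0
  = Num.conj (lc_factor s) * lc_factor s' * braket M s s'.
Proof.
rewrite /lc adjZ -!scalemxAl -scalemxAr [LHS]mxE [X in _ * X]mxE mulrA.
congr (_ * _).
rewrite (big_morph _ (@adjD _ _) (@adj0 _ _)) mulmx_suml mulmx_suml summxE.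
apply: eq_bigr => p _; rewrite mulmx_sumr summxE; apply: eq_bigr => q _.
by rewrite adjZ -!scalemxAl -scalemxAr mxE [X in _ * X]mxE mulrA.
Qed.

Lemma lc_braket_eq0 m (M : 'M[C]_m) s s' :
  ((adj (lc m s) *m M *m lc m s') 0 0 == 0) = (braket M s s' == 0).
Proof.
rewrite lc_braket; have [-> | s_nz] := eqVneq s [::].
  by rewrite braket_nil mulr0 eqxx.
have [-> | s'_nz] := eqVneq s' [::]; first by rewrite braket_nilr mulr0 eqxx.
by rewrite !mulf_eq0 conjC_eq0 !(negPf (lc_factor_neq0 _)).
Qed.

Lemma lc_overlap_eq0 m s s' :
  ((adj (lc m s) *m lc m s') 0 0 == 0) = (overlap m s s' == 0).
Proof. by rewrite -lc_braket_eq0 mulmx1. Qed.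

Lemma overlapC m s s' : overlap m s' s = Num.conj (overlap m s s').
Proof.
rewrite /overlap /braket rmorph_sum exchange_big; apply: eq_bigr => q _.
rewrite rmorph_sum; apply: eq_bigr => p _.
rewrite !rmorphM /= conjCK !mxelem1 conjC_nat.
by have [->|pq] := eqVneq p.2 q.2; rewrite /= ?mulr0 // [q.1 * _]mulrC.
Qed.

Lemma overlap_neq0C m s s' : overlap m s s' != 0 -> overlap m s' s != 0.
Proof. by rewrite overlapC conjC_eq0. Qed.

Lemma overlap_disjoint m s s' :
  all (fun p => all (fun q => p.2 != q.2) s') s -> overlap m s s' = 0.
Proof.
move/allP=> disj; rewrite /overlap /braket big1_seq // => p /= /disj /allP disj_p.
by rewrite big1_seq // => q /= /disj_p /negPf p_q; rewrite mxelem1 p_q mulr0.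
Qed.

Definition offdiag_zero m (M : 'M[C]_m) : Prop :=
  forall i j, (i < m)%N -> (j < m)%N -> i != j -> mxelem M i j = 0.

Definition uniform m : seq (C * nat) := [seq (1, j) | j <- iota 0 m].

Lemma braket_uniform m (M : 'M[C]_m) s : offdiag_zero M ->
  braket M s (uniform m) = \sum_(p <- s) Num.conj p.1 * mxelem M p.2 p.2.
Proof.
move=> M_diag; apply: eq_bigr => p _; rewrite big_map.
under eq_bigr do rewrite /= mulr1; rewrite -mulr_sumr; congr (_ * _).
have [lt_pm | le_mp] := ltnP p.2 m; last first.
  by rewrite big1 ?mxelem_out ?le_mp // => j _; rewrite mxelem_out ?le_mp.
rewrite (bigD1_seq p.2) ?iota_uniq ?mem_iota //= big1_seq ?addr0 // => j.
by rewrite mem_iota => /andP [j_p /andP [_ lt_jm]]; apply: M_diag; rewrite // eq_sym.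
Qed.

Lemma overlap_uniform m s :
  overlap m s (uniform m) = \sum_(p <- s) Num.conj p.1 * (p.2 < m)%N%:R.
Proof.
rewrite /overlap braket_uniform => [|i j _ _ /negPf i_j]; last by rewrite mxelem1 i_j.
by apply: eq_bigr => p _; rewrite mxelem1 eqxx.
Qed.

Lemma overlap_basis m i : (i < m)%N -> overlap m (basis1 C i) (basis1 C i) != 0.
Proof.
by move=> lt_im; rewrite /overlap /braket !big_seq1 mxelem1 eqxx lt_im conjC1 !mul1r oner_eq0.
Qed.

Lemma overlap_basis0_minus0 m i :
  (0 < i)%N -> (0 < m)%N -> overlap m (basis1 C 0) (minus0 C i) != 0.
Proof.
move=> i_gt0 m_gt0; rewrite /overlap /braket big_seq1 !big_cons big_nil /= !mxelem1.
by rewrite eqxx m_gt0 [0%N == i]eq_sym (gtn_eqF i_gt0) /= conjC1 !mul1r mulr0 !addr0 oner_eq0.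
Qed.

Lemma overlap_basis_minus0 m i :
  (0 < i < m)%N -> overlap m (basis1 C i) (minus0 C i) != 0.
Proof.
case/andP=> i_gt0 lt_im; rewrite /overlap /braket big_seq1 !big_cons big_nil /= !mxelem1.
rewrite eqxx lt_im (gtn_eqF i_gt0) conjC1 mul1r mulr0 add0r addr0 /=.
by rewrite mulr1 mul1r oppr_eq0 oner_eq0.
Qed.

Lemma overlap_minus0 m i j :
  (0 < i < m)%N -> (0 < j < m)%N -> overlap m (minus0 C i) (minus0 C j) != 0.
Proof.
case/andP=> i_gt0 lt_im /andP [j_gt0 lt_jm].
rewrite /overlap /braket !big_cons !big_nil /= !mxelem1 eqxx lt_im.
rewrite (gtn_eqF i_gt0) [0%N == j]eq_sym (gtn_eqF j_gt0) (ltn_trans i_gt0 lt_im) /=.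
rewrite conjC1 conjCN1.
case: (i == j); rewrite /= !(mul1r, mulr1, mulr0, addr0, add0r, mulrNN) ?oner_eq0 //.
by rewrite -mulr2n pnatr_eq0.
Qed.

Lemma overlap_basis_uniform m i : (i < m)%N -> overlap m (basis1 C i) (uniform m) != 0.
Proof. by move=> lt_im; rewrite overlap_uniform big_seq1 lt_im conjC1 mul1r oner_eq0. Qed.

Lemma overlap_minus0_uniform m i :
  (0 < i < m)%N -> overlap m (minus0 C i) (uniform m) = 0.
Proof.
case/andP=> i_gt0 lt_im; rewrite overlap_uniform !big_cons big_nil /=.
by rewrite lt_im (ltn_trans i_gt0 lt_im) conjC1 conjCN1 mul1r mulN1r addr0 subrr.
Qed.

Lemma overlap_step_uniform m i :
  (0 < i < m)%N -> overlap m [:: (1, i.-1); (-1, i)] (uniform m) = 0.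
Proof.
case/andP=> i_gt0 lt_im; rewrite overlap_uniform !big_cons big_nil /=.
by rewrite lt_im (leq_ltn_trans (leq_pred i) lt_im) conjC1 conjCN1 mul1r mulN1r addr0 subrr.
Qed.

Lemma braket_basis m (M : 'M[C]_m) i j : braket M (basis1 C i) (basis1 C j) = mxelem M i j.
Proof. by rewrite /braket !big_seq1 conjC1 !mul1r. Qed.

Lemma braket_basis_minus0 m (M : 'M[C]_m) i j :
  braket M (basis1 C i) (minus0 C j) = mxelem M i 0 - mxelem M i j.
Proof. by rewrite /braket big_seq1 !big_cons big_nil /= conjC1 !mul1r addr0 mulN1r. Qed.

Lemma braket_minus0_basis m (M : 'M[C]_m) i j :
  braket M (minus0 C i) (basis1 C j) = mxelem M 0 j - mxelem M i j.
Proof.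
by rewrite /braket !big_cons !big_nil /= conjC1 conjCN1 !mul1r !addr0 !mulr1 mulN1r.
Qed.

Lemma mxelem_eq_minus0_uniform m (M : 'M[C]_m) i : offdiag_zero M ->
  braket M (minus0 C i) (uniform m) = 0 -> mxelem M i i = mxelem M 0 0.
Proof.
move=> M_diag; rewrite braket_uniform // !big_cons big_nil /= conjC1 conjCN1.
by rewrite mul1r mulN1r addr0 => /subr0_eq.
Qed.

Lemma mxelem_eq_step_uniform m (M : 'M[C]_m) i : offdiag_zero M ->
  braket M [:: (1, i.-1); (-1, i)] (uniform m) = 0 -> mxelem M i i = mxelem M i.-1 i.-1.
Proof.
move=> M_diag; rewrite braket_uniform // !big_cons big_nil /= conjC1 conjCN1.
by rewrite mul1r mulN1r addr0 => /subr0_eq.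
Qed.

Lemma trivial_op_const_diag m (E : 'M[C]_m) : (0 < m)%N -> offdiag_zero E ->
  (forall i, (0 < i < m)%N -> mxelem E i i = mxelem E 0 0) -> trivial_op E.
Proof.
move=> m_gt0 E_diag E_const; exists (mxelem E 0 0); apply/matrixP => i j.
rewrite mxE -mxelem_ord; have [<- | i_j] := eqVneq i j; last first.
  by rewrite mulr0n E_diag // val_eqE.
rewrite mulr1n; have [i0 | i_gt0] := posnP i; first by rewrite i0.
by rewrite E_const // i_gt0 ltn_ord.
Qed.

End LocalAlgebra.

Section ProductStates.
Variables (C : numClosedFieldType) (n : nat) (d : nat -> nat).

Lemma inner_eq0 (f g : spec C) l :
  (l < n)%N -> overlap (d l) (f l) (g l) = 0 -> inner n d f g = 0.
Proof.
move=> lt_ln fg_l; apply/eqP; rewrite /inner (bigD1 (Ordinal lt_ln)) //=.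
by rewrite mulf_eq0 lc_overlap_eq0 fg_l eqxx.
Qed.

Lemma sandwich_eq0 (f g : spec C) t (E : 'M[C]_(d t)) :
  (forall l, (l < n)%N -> l != t -> overlap (d l) (f l) (g l) != 0) ->
  sandwich n f g E = 0 -> braket E (f t) (g t) = 0.
Proof.
move=> fg_nz /eqP; rewrite /sandwich mulf_eq0 lc_braket_eq0 => /orP [|/eqP //].
rewrite prodf_seq_eq0 => /hasP [l _ /andP [l_t]].
by rewrite lc_overlap_eq0 (negPf (fg_nz l (ltn_ord l) l_t)).
Qed.

End ProductStates.

Lemma st_pair (C : numClosedFieldType) a b (u v : seq (C * nat)) l :
  st [:: (a, u); (b, v)] l = if a == l then u else if b == l then v else [:: (1, 0%N)].
Proof. by rewrite /st /=; case: (a == l); case: (b == l). Qed.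

Lemma st_triple (C : numClosedFieldType) a b c (u v w : seq (C * nat)) l :
  st [:: (a, u); (b, v); (c, w)] l =
  if a == l then u else if b == l then v else if c == l then w else [:: (1, 0%N)].
Proof. by rewrite /st /=; case: (a == l); case: (b == l); case: (c == l). Qed.

(* The label (b, k, i) names the state with index i of the family B_1 (b = 0),
   B_(k+2) (b = 1), B_(n+k+1) (b = 2), B_(2n-1) (b = 3) or B_(2n) (b = 4),
   where k is a 0-indexed party; (5, 0, 0) names the stopper state. *)
Definition label := (nat * nat * nat)%type.

Section Labels.
Variables (C : numClosedFieldType) (n : nat) (d : nat -> nat).

Definition label_state (L : label) : spec C :=
  let: (b, k, i) := L in
  match b with
  | 0 => st [:: (0%N, minus0 C i); (n.-1, basis1 C i)]
  | 1 => st [:: (k, basis1 C i); (k.+1, minus0 C i)]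
  | 2 => st [:: (k, basis1 C 1); (k.+1, minus0 C i); (k.+2, basis1 C i)]
  | 3 => st [:: (0%N, basis1 C (if odd i then 1%N else 2%N)); (n.-2, basis1 C 1);
                 (n.-1, [:: (1, i.-1); (-1, i)])]
  | 4 => st [:: (0%N, minus0 C 2); (n.-2, minus0 C 2); (n.-1, basis1 C i)]
  | _ => fun l => uniform C (d l)
  end.

Definition labels : seq label :=
  [seq (0, 0, i) | i <- iota 1 (d 0).-1]
  ++ [seq (1, k, i) | k <- iota 0 n.-1, i <- iota 1 (d k).-1]
  ++ [seq (2, k, i) | k <- iota 0 n.-2, i <- iota (d k) (d k.+1 - d k)]
  ++ [seq (3, 0, i) | i <- iota (d n.-2) (d n.-1 - d n.-2)]
  ++ [seq (4, 0, i) | i <- iota (d 0) (d n.-1 - d 0)]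
  ++ [:: (5, 0, 0)]%N.

Lemma theset_labels : theset C n d = map label_state labels.
Proof.
rewrite /theset /labels !map_cat !map_flatten -!map_comp.
by congr (_ ++ (flatten _ ++ (flatten _ ++ _))); apply: eq_map => k /=; rewrite -map_comp.
Qed.

Definition label_valid (L : label) : bool :=
  let: (b, k, i) := L in
  match b with
  | 0 => (k == 0) && (1 <= i < d 0)
  | 1 => (k < n.-1) && (1 <= i < d k)
  | 2 => (k < n.-2) && (d k <= i < d k.+1)
  | 3 => (k == 0) && (d n.-2 <= i < d n.-1)
  | 4 => (k == 0) && (d 0 <= i < d n.-1)
  | 5 => (k == 0) && (i == 0)
  | _ => false
  end%N.

Lemma mem_tagged_map b k (s : seq nat) (L : label) :
  (L \in [seq (b, k, i) | i <- s]) = [&& L.1.1 == b, L.1.2 == k & L.2 \in s].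
Proof.
apply/mapP/idP => [[i s_i ->] | ]; first by rewrite /= !eqxx s_i.
by case: L => [[b' k'] i] /= /and3P [/eqP -> /eqP -> s_i]; exists i.
Qed.

Lemma mem_tagged_allpairs b (r : seq nat) (s : nat -> seq nat) (L : label) :
  (L \in [seq (b, k, i) | k <- r, i <- s k]) = [&& L.1.1 == b, L.1.2 \in r & L.2 \in s L.1.2].
Proof.
apply/allpairsPdep/idP => [[k [i [r_k s_i ->]]] | ]; first by rewrite /= eqxx r_k s_i.
by case: L => [[b' k] i] /= /and3P [/eqP -> r_k s_i]; exists k, i.
Qed.

Lemma mem_labels L : (L \in labels) = label_valid L.
Proof.
case: L => [[b k] i].
rewrite /labels !mem_cat !mem_tagged_allpairs !mem_tagged_map !mem_iota inE /=.
case: b => [|[|[|[|[|[|b]]]]]] /=; rewrite ?andbF ?orbF ?xpair_eqE //=; lia.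
Qed.

Lemma uniq_tagged_allpairs b (r : seq nat) (s : nat -> seq nat) :
  uniq r -> (forall k, uniq (s k)) -> uniq [seq ((b, k, i) : label) | k <- r, i <- s k].
Proof.
move=> r_uniq s_uniq; elim: r r_uniq => //= k r IHr /andP [r'k r_uniq].
rewrite cat_uniq IHr // andbT map_inj_uniq ?s_uniq; last by move=> i j [].
apply/hasPn => L; rewrite mem_tagged_allpairs mem_tagged_map => /and3P [_ r_L _].
by apply/negP => /and3P [_ /eqP L_k _]; move: r'k; rewrite -L_k r_L.
Qed.

Lemma uniq_labels : uniq labels.
Proof.
rewrite /labels !cat_uniq !uniq_tagged_allpairs ?map_inj_uniq ?iota_uniq //=;
  try by [move=> ? ? [] | move=> ?; apply: iota_uniq].
repeat (apply/andP; split) => //; try apply/hasPn => -[[b k] i].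
all: rewrite ?mem_cat ?inE ?mem_tagged_allpairs ?mem_tagged_map ?xpair_eqE /=; lia.
Qed.

Lemma size_tagged_allpairs b (r : seq nat) (s : nat -> seq nat) :
  size [seq ((b, k, i) : label) | k <- r, i <- s k] = (\sum_(k <- r) size (s k))%N.
Proof. by rewrite size_allpairs_dep sumnE big_map. Qed.

Lemma size_labels : size labels =
  ((d 0).-1 + \sum_(0 <= k < n.-1) (d k).-1 + \sum_(0 <= k < n.-2) (d k.+1 - d k)
   + (d n.-1 - d n.-2) + (d n.-1 - d 0) + 1)%N.
Proof.
rewrite /labels !size_cat !size_map !size_tagged_allpairs !size_iota /= /index_iota !subn0.
under eq_bigr do rewrite size_iota.
under [X in (_ + (_ + (X + _)))%N]eq_bigr do rewrite size_iota.
lia.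
Qed.

Lemma orth_preserving_braket t (E : 'M[C]_(d t)) (L1 L2 : label) u v :
  orth_preserving n (theset C n d) E ->
  label_valid L1 -> label_valid L2 -> L1 != L2 ->
  (forall l, (l < n)%N -> l != t -> overlap (d l) (label_state L1 l) (label_state L2 l) != 0) ->
  label_state L1 t = u -> label_state L2 t = v -> braket E u v = 0.
Proof.
rewrite -!mem_labels => E_op L1_in L2_in L12 nz <- <-; apply: sandwich_eq0 nz _.
have := E_op (index L1 labels) (index L2 labels).
rewrite theset_labels size_map !index_mem !(nth_map (0, 0, 0)%N) ?index_mem // !nth_index //.
apply=> // /(congr1 (nth (0, 0, 0)%N labels)); rewrite !nth_index // => /eqP.
by rewrite (negPf L12).
Qed.

End Labels.

Definition label_lt (L1 L2 : label) : bool :=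
  let: (b1, k1, i1) := L1 in let: (b2, k2, i2) := L2 in
  ((b1 < b2) || (b1 == b2) && ((k1 < k2) || (k1 == k2) && (i1 < i2)))%N.

Lemma label_lt_total (L1 L2 : label) : L1 != L2 -> label_lt L1 L2 || label_lt L2 L1.
Proof. by case: L1 L2 => [[b1 k1] i1] [[b2 k2] i2]; rewrite /= !xpair_eqE; lia. Qed.

Ltac decide_ifs := repeat match goal with
  | |- context [if ?a == ?b then _ else _] =>
      first [ have -> : (a == b) = true by lia
            | have -> : (a == b) = false by lia
            | case: (@eqP _ a b) => ?; try subst ]
  | |- context [if ?c then _ else _] =>
      first [ have -> : c = true by lia | have -> : c = false by lia | case: c ]
  end.

Ltac unfold_label_state := rewrite /label_state /= ?st_pair ?st_triple; decide_ifs.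

Ltac orthogonal_at l :=
  exists l; [lia | unfold_label_state;
    first [ apply: overlap_disjoint; rewrite /= ?andbT; lia
          | apply: overlap_minus0_uniform; lia
          | apply: overlap_step_uniform; lia ]].

Lemma sum_predn (f : nat -> nat) a b : (forall k, (a <= k < b)%N -> (0 < f k)%N) ->
  (\sum_(a <= k < b) (f k).-1 + (b - a) = \sum_(a <= k < b) f k)%N.
Proof.
move=> f_gt0; rewrite -[(b - a)%N]muln1 -sum_nat_const_nat -big_split /=.
by apply: eq_big_nat => k /f_gt0; rewrite addn1 => /prednK.
Qed.

Section TheSet.
Variables (C : numClosedFieldType) (m : nat) (d : nat -> nat).
Local Notation n := m.+3.
Local Notation state := (@label_state C n d).
Local Notation valid := (label_valid n d).
Hypothesis dim_step : forall k, (k.+1 < n)%N -> (d k <= d k.+1)%N.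
Hypothesis d0_ge3 : (3 <= d 0)%N.

Lemma dim_mono a b : (a <= b)%N -> (b < n)%N -> (d a <= d b)%N.
Proof.
elim: b => [|b IHb]; first by rewrite leqn0 => /eqP ->.
rewrite leq_eqVlt => /orP [/eqP -> // | le_ab lt_bn].
exact: leq_trans (IHb le_ab (ltnW lt_bn)) (dim_step lt_bn).
Qed.

Lemma dim_ge3 l : (l < n)%N -> (3 <= d l)%N.
Proof. by move=> lt_ln; apply: leq_trans d0_ge3 (dim_mono _ lt_ln). Qed.

Lemma size_theset :
  (size (theset C n d) + n = \sum_(1 <= i < n.-1) d i + 2 * d n.-1 + 1)%N.
Proof.
rewrite theset_labels size_map size_labels /=.
rewrite telescope_sumn_in // => [|k /andP [_ lt_km]]; last by apply: dim_step; lia.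
have d_gt0 k : (0 <= k < m.+2)%N -> (0 < d k)%N.
  by case/andP=> _ lt_km; have := @dim_ge3 k; lia.
have := sum_predn d_gt0; rewrite !(big_ltn (isT : 0 < m.+2)%N).
have := @dim_mono 0 m.+1; have := @dim_step m.+1; lia.
Qed.

Lemma label_orthogonal_at (L1 L2 : label) : valid L1 -> valid L2 -> label_lt L1 L2 ->
  exists2 l, (l < n)%N & overlap (d l) (state L1 l) (state L2 l) = 0.
Proof.
case: L1 L2 => [[b1 k1] i1] [[b2 k2] i2].
have d_k1 : (k1 < n)%N -> (d 0 <= d k1)%N by apply: dim_mono.
have d_k2 : (k2 < n)%N -> (d 0 <= d k2)%N by apply: dim_mono.
have d_k1S : (k1.+1 < n)%N -> (d k1 <= d k1.+1)%N by apply: dim_step.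
have d_k2S : (k2.+1 < n)%N -> (d k2 <= d k2.+1)%N by apply: dim_step.
have d_m : (d 0 <= d m)%N by apply: dim_mono; lia.
have d_mS : (d 0 <= d m.+1)%N by apply: dim_mono; lia.
have d_mSS : (d m.+1 <= d m.+2)%N by apply: dim_step; lia.
case: b1 => [|[|[|[|[|[|b1]]]]]]; case: b2 => [|[|[|[|[|[|b2]]]]]] //=; rewrite ?andbF //.
all: move=> V1 V2 lt12; try by exfalso; move: lt12; lia.
- orthogonal_at m.+2.
- by case: (posnP k2) => k2_0; [orthogonal_at m.+2 | orthogonal_at k2].
- orthogonal_at m.+2.
- orthogonal_at m.+1.
- orthogonal_at m.+2.
- orthogonal_at 0%N.
- orthogonal_at k1.
- case: (eqVneq k1 k2) => k12; first orthogonal_at k2.+2.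
  case: (eqVneq k1.+1 k2) => k12S; first orthogonal_at k1.
  orthogonal_at k2.
- by case: (posnP k1) => k1_0; [orthogonal_at m.+2 | orthogonal_at 0%N].
- case: (eqVneq k1 m.+1) => k1_m; last orthogonal_at m.+2.
  by case: (eqVneq i1 2) => i1_2; [orthogonal_at m.+2 | orthogonal_at m.+1].
- orthogonal_at k1.+1.
- by case: (eqVneq k1 k2) => k12; [orthogonal_at k1.+2 | orthogonal_at k1].
- by case: (eqVneq k1 m) => k1_m; [orthogonal_at m.+1 | orthogonal_at m.+2].
- orthogonal_at k1.
- orthogonal_at k1.+1.
- case: (eqVneq i2 i1.+1) => i2_i1S; last orthogonal_at m.+2.
  exists 0%N => //; rewrite /label_state /= !st_triple /= i2_i1S oddS.
  by apply: overlap_disjoint; case: (odd i1).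
- orthogonal_at m.+1.
- orthogonal_at m.+2.
- orthogonal_at m.+2.
- orthogonal_at 0%N.
Qed.

Lemma theset_pairwise_orthogonal : states_pairwise_orthogonal n d (theset C n d).
Proof.
move=> a b; rewrite theset_labels size_map => lt_a lt_b a_b.
rewrite !(nth_map (0, 0, 0)%N) //.
set L1 := nth _ _ a; set L2 := nth _ _ b.
have V1 : valid L1 by rewrite -mem_labels mem_nth.
have V2 : valid L2 by rewrite -mem_labels mem_nth.
have L12 : L1 != L2 by rewrite nth_uniq ?uniq_labels //; apply/eqP.
have /orP [lt12 | lt21] := label_lt_total L12.
  by have [l lt_ln /inner_eq0] := label_orthogonal_at V1 V2 lt12; apply.
have [l lt_ln L21_l] := label_orthogonal_at V2 V1 lt21.
by apply: (inner_eq0 lt_ln); rewrite overlapC L21_l rmorph0.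
Qed.

Ltac nonzero_overlap := first
  [ apply: overlap_basis; lia
  | apply: overlap_basis0_minus0; lia
  | apply/overlap_neq0C/overlap_basis0_minus0; lia
  | apply: overlap_basis_minus0; lia
  | apply/overlap_neq0C/overlap_basis_minus0; lia
  | apply: overlap_minus0; lia
  | apply: overlap_basis_uniform; lia ].

Ltac braket_vanishes E_op L1 L2 :=
  apply: (orth_preserving_braket (L1 := L1) (L2 := L2) E_op);
  [ rewrite /=; lia | rewrite /=; lia | rewrite !xpair_eqE /=; lia
  | let l := fresh "l" in let lt_ln := fresh "lt_ln" in
    move=> l lt_ln ?; have := dim_ge3 lt_ln => ?; unfold_label_state; nonzero_overlap
  | by unfold_label_state | by unfold_label_state ].

Lemma first_party_trivial (E : 'M[C]_(d 0)) :
  orth_preserving n (theset C n d) E -> trivial_op E.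
Proof.
move=> E_op.
have d_01 : (d 0 <= d 1)%N by apply: dim_step.
have d_0m : (d 0 <= d m.+2)%N by apply: dim_mono; lia.
have E_diag : offdiag_zero E.
  move=> i j lt_i lt_j i_j; rewrite -braket_basis.
  have [i0 | i_gt0] := posnP i; first by subst i; braket_vanishes E_op (1, 1, j)%N (1, 0, j)%N.
  have [j0 | j_gt0] := posnP j; first by subst j; braket_vanishes E_op (1, 0, i)%N (1, 1, i)%N.
  by braket_vanishes E_op (1, 0, i)%N (1, 0, j)%N.
apply: (trivial_op_const_diag _ E_diag) => [|i lt_i]; first lia.
apply: mxelem_eq_minus0_uniform => //.
by braket_vanishes E_op (0, 0, i)%N (5, 0, 0)%N.
Qed.

Section MiddleParty.
Variables (t : nat) (E : 'M[C]_(d t.+1)).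
Hypotheses (le_tm : (t <= m)%N) (E_op : orth_preserving n (theset C n d) E).

Lemma middle_party_offdiag_zero : offdiag_zero E.
Proof.
have d_t : (d t <= d t.+1)%N by apply: dim_step; lia.
have d_tS : (d t.+1 <= d t.+2)%N by apply: dim_step; lia.
have d_0t : (d 0 <= d t)%N by apply: dim_mono; lia.
have d_0m : (d 0 <= d m.+1)%N by apply: dim_mono; lia.
have d_m : (d m.+1 <= d m.+2)%N by apply: dim_step; lia.
have E_pos i j : (0 < i < d t.+1)%N -> (0 < j < d t.+1)%N -> i != j -> mxelem E i j = 0.
  by move=> *; rewrite -braket_basis; braket_vanishes E_op (1, t.+1, i)%N (1, t.+1, j)%N.
move=> i j lt_i lt_j i_j; rewrite -braket_basis.
have [i0 | i_gt0] := posnP i; [subst i | have [j0 | j_gt0] := posnP j; [subst j |]].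
- have [lt_tm | t_m] : (t < m)%N \/ t = m by lia.
    by braket_vanishes E_op (1, t.+2, j)%N (1, t.+1, j)%N.
  (* for t = m there is no family B_(k+2) with k = t+2; B_1 and B_(2n) replace it *)
  subst t; have [lt_j0 | le_0j] := ltnP j (d 0).
    by braket_vanishes E_op (0, 0, j)%N (1, m.+1, j)%N.
  have E_2j : mxelem E 2 j = 0 by apply: E_pos; lia.
  have : braket E (minus0 C 2) (basis1 C j) = 0.
    by braket_vanishes E_op (4, 0, j)%N (1, m.+1, j)%N.
  by rewrite braket_minus0_basis E_2j subr0 braket_basis.
- have [lt_tm | t_m] : (t < m)%N \/ t = m by lia.
    by braket_vanishes E_op (1, t.+1, i)%N (1, t.+2, i)%N.
  subst t; have [lt_i0 | le_0i] := ltnP i (d 0).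
    by braket_vanishes E_op (1, m.+1, i)%N (0, 0, i)%N.
  have E_i2 : mxelem E i 2 = 0 by apply: E_pos; lia.
  have : braket E (basis1 C i) (minus0 C 2) = 0.
    by braket_vanishes E_op (1, m.+1, i)%N (4, 0, i)%N.
  by rewrite braket_basis_minus0 E_i2 subr0 braket_basis.
- by rewrite braket_basis E_pos ?i_gt0 ?j_gt0.
Qed.

Lemma middle_party_trivial : trivial_op E.
Proof.
apply: (trivial_op_const_diag _ middle_party_offdiag_zero) => [|i lt_i].
  by have := dim_ge3 (_ : t.+1 < n)%N; lia.
apply: (mxelem_eq_minus0_uniform middle_party_offdiag_zero).
have d_t : (d t <= d t.+1)%N by apply: dim_step; lia.
have d_tS : (d t.+1 <= d t.+2)%N by apply: dim_step; lia.
have [lt_it | le_ti] := ltnP i (d t).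
  by braket_vanishes E_op (1, t, i)%N (5, 0, 0)%N.
by braket_vanishes E_op (2, t, i)%N (5, 0, 0)%N.
Qed.

End MiddleParty.

Section LastParty.
Variable E : 'M[C]_(d m.+2).
Hypothesis E_op : orth_preserving n (theset C n d) E.

Lemma last_party_offdiag_zero : offdiag_zero E.
Proof.
have d_01 : (d 0 <= d 1)%N by apply: dim_step.
have d_0m : (d 0 <= d m.+1)%N by apply: dim_mono; lia.
have d_m : (d m.+1 <= d m.+2)%N by apply: dim_step; lia.
have E_pos i j : (0 < i < d m.+2)%N -> (0 < j < d m.+2)%N -> i != j -> mxelem E i j = 0.
  move=> lt_i lt_j i_j; rewrite -braket_basis.
  have [lt_i0 | le_0i] := ltnP i (d 0); have [lt_j0 | le_0j] := ltnP j (d 0).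
  - by braket_vanishes E_op (0, 0, i)%N (0, 0, j)%N.
  - by braket_vanishes E_op (0, 0, i)%N (4, 0, j)%N.
  - by braket_vanishes E_op (4, 0, i)%N (0, 0, j)%N.
  - by braket_vanishes E_op (4, 0, i)%N (4, 0, j)%N.
move=> i j lt_i lt_j i_j; rewrite -braket_basis.
have [i0 | i_gt0] := posnP i; [subst i | have [j0 | j_gt0] := posnP j; [subst j |]].
- have [lt_j0 | le_0j] := ltnP j (d 0).
    by braket_vanishes E_op (1, 0, j)%N (0, 0, j)%N.
  by braket_vanishes E_op (1, 0, 2)%N (4, 0, j)%N.
- have [lt_i0 | le_0i] := ltnP i (d 0).
    by braket_vanishes E_op (0, 0, i)%N (1, 0, i)%N.
  by braket_vanishes E_op (4, 0, i)%N (1, 0, 2)%N.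
- by rewrite braket_basis E_pos ?i_gt0 ?j_gt0.
Qed.

Lemma last_party_trivial : trivial_op E.
Proof.
have E_diag := last_party_offdiag_zero.
have d_m : (d m.+1 <= d m.+2)%N by apply: dim_step; lia.
have d_m3 : (3 <= d m.+1)%N by apply: dim_ge3; lia.
apply: (trivial_op_const_diag _ E_diag); first lia.
elim=> [// | i IHi] /andP [_ lt_i].
have [lt_im | le_mi] := ltnP i.+1 (d m.+1).
  apply: mxelem_eq_minus0_uniform => //.
  by braket_vanishes E_op (1, m.+1, i.+1)%N (5, 0, 0)%N.
have -> : mxelem E i.+1 i.+1 = mxelem E i i.
  apply: (mxelem_eq_step_uniform E_diag).
  by braket_vanishes E_op (3, 0, i.+1)%N (5, 0, 0)%N.
by apply: IHi; lia.
Qed.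

End LastParty.

End TheSet.

Theorem theorem2 (C : numClosedFieldType) (n : nat) (d : nat -> nat) :
  (3 <= n)%N -> (3 <= d 0%N)%N ->
  (forall k : nat, (k.+1 < n)%N -> (d k <= d k.+1)%N) ->
  (size (theset C n d) + n = \sum_(1 <= i < n.-1) d i + 2 * d n.-1 + 1)%N
  /\ @states_pairwise_orthogonal C n d (theset C n d)
  /\ (forall (t : nat) (E : 'M[C]_(d t)), (t < n)%N ->
        psd E -> @orth_preserving C n d (theset C n d) t E -> trivial_op E).
Proof.
case: n => [|[|[|m]]] // _ d0_ge3 dim_step.
split; first exact: size_theset.
split; first exact: theset_pairwise_orthogonal.
move=> [|t] E lt_tn _ E_op; first exact: first_party_trivial E_op.
have [le_tm | lt_mt] := leqP t m; first exact: middle_party_trivial E_op.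
have t_m : t = m.+1 by lia.
by subst t; apply: last_party_trivial E_op.
Qed.
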